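(* Let $S$ be a finite state space, $P$ a row-stochastic $|S|\times|S|$ matrix, $R\in\mathbb{R}^{|S|}$, $\gamma\in(0,1)$, $\beta\in(0,1)$, $d_\mu$ a probability vector on $S$, $f^\top=d_\mu^\top(I-\beta P)^{-1}$ with $f(s)>0$ for all $s$, and $\kappa=\min_s d_\mu(s)/f(s)$. Let $T(V)=R+\gamma PV$, let $V^\pi=(I-\gamma P)^{-1}R$ be its fixed point, let $\Phi$ be an $n\times|S|$ feature matrix (columns $\phi(s)\in\mathbb{R}^n$), and let $\Pi_f$ be the orthogonal projection onto $\{\Phi^\top\theta:\theta\in\mathbb{R}^n\}$ with respect to $\|v\|_f=\sqrt{\sum_s f(s)v(s)^2}$. Assume $\beta>\gamma^2(1-\kappa)$ and let $\theta^*$ satisfy $\Phi^\top\theta^*=\Pi_f T(\Phi^\top\theta^* )$. Then $$\|\Phi^\top\theta^*-V^\pi\|_f\le \frac{1}{\sqrt{1-\frac{\gamma^2}{\beta}(1-\kappa)}}\,\|\Pi_f V^\pi-V^\pi\|_f,$$ $$\|\Phi^\top\theta^*-V^\pi\|_{d_\mu}\le \frac{1}{\sqrt{\gamma\left(1-\frac{\gamma^2}{\beta}(1-\kappa)\right)}}\,\|\Pi_f V^\pi-V^\pi\|_f,$$ where $\|v\|_{d_\mu}=\sqrt{\sum_s d_\mu(s)v(s)^2}$.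
   Context: $P,R$ are the transition matrix and reward vector of the target policy $\pi$ in a finite MDP with discount $\gamma$; $d_\mu$ is the stationary state distribution of the behavior policy; $\theta^*$ is the limit of the ETD(0, $\beta$) algorithm, characterized as a solution of the projected fixed-point equation $V=\Pi_f T V$. *)

From HB Require Import structures.
From mathcomp Require Import all_boot all_order all_algebra.
From mathcomp Require Import reals.
Set Implicit Arguments. Unset Strict Implicit. Unset Printing Implicit Defensive.
Import Order.TTheory GRing.Theory Num.Theory.
Local Open Scope ring_scope.

Section Defs.
Variables (R : realType) (k : nat).

Definition row_stochastic (P : 'M[R]_k) : Prop :=
  (forall i j, 0 <= P i j) /\ (forall i, \sum_(j < k) P i j = 1).

Definition prob_vec (d : 'cV[R]_k) : Prop :=
  (forall i, 0 <= d i 0) /\ \sum_(i < k) d i 0 = 1.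

Definition emph_f (d : 'cV[R]_k) (beta : R) (P : 'M[R]_k) : 'cV[R]_k :=
  (invmx (1%:M - beta *: P))^T *m d.

Definition bellman (r : 'cV[R]_k) (gamma : R) (P : 'M[R]_k) (V : 'cV[R]_k)
  : 'cV[R]_k := r + gamma *: (P *m V).

Definition Vpi (r : 'cV[R]_k) (gamma : R) (P : 'M[R]_k) : 'cV[R]_k :=
  invmx (1%:M - gamma *: P) *m r.

Definition wdot (w u v : 'cV[R]_k) : R := \sum_(i < k) w i 0 * u i 0 * v i 0.
Definition wnorm (w v : 'cV[R]_k) : R := Num.sqrt (\sum_(i < k) w i 0 * v i 0 ^+ 2).

(* [is_proj_f f Phi v p] : p = Pi_f v, the orthogonal projection of v onto
   {Phi^T theta} w.r.t. the f-weighted inner product. *)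
Definition is_proj_f (n : nat) (f : 'cV[R]_k) (Phi : 'M[R]_(n, k))
  (v p : 'cV[R]_k) : Prop :=
  (exists theta : 'cV[R]_n, p = Phi^T *m theta) /\
  (forall theta : 'cV[R]_n, wdot f (v - p) (Phi^T *m theta) = 0).

End Defs.

From HB Require Import structures.
From mathcomp Require Import all_boot all_order all_algebra.
From mathcomp Require Import reals ring lra.
Import Order.TTheory GRing.Theory Num.Theory.
Local Open Scope ring_scope.

(** Write [e = Phi^T theta_star - V^pi] and [p = Pi_f V^pi].  Since [V^pi] is the
    fixed point of [T], [T(Phi^T theta_star) - V^pi = gamma P e], and because
    [Phi^T theta_star - p] is the projection of [gamma P e], Pythagoras gives
    [||e||_f^2 <= ||gamma P e||_f^2 + ||p - V^pi||_f^2].  By Jensen,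
    [||P e||_f^2 <= sum_s (P^T f)(s) e(s)^2], and the emphatic weights satisfy
    [beta P^T f = f - d_mu <= (1 - kappa) f], so [T] contracts the squared
    [f]-norm by [gamma^2 (1 - kappa) / beta < 1].  Finally [d_mu <= f]. *)

Set Implicit Arguments. Unset Strict Implicit.

Section WeightedNorm.
Variables (R : realType) (k : nat).
Implicit Types (w u v z : 'cV[R]_k) (c : R).

Definition wnorm2 w v : R := \sum_(i < k) w i 0 * v i 0 ^+ 2.

Lemma wnormE w v : wnorm w v = Num.sqrt (wnorm2 w v).
Proof. by []. Qed.

Lemma wdotC w u v : wdot w u v = wdot w v u.
Proof. by apply: eq_bigr => i _; ring. Qed.

Lemma wdotNl w u z : wdot w (- u) z = - wdot w u z.
Proof. by rewrite /wdot -sumrN; apply: eq_bigr => i _; rewrite !mxE; ring. Qed.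

Lemma wdotBl w u v z : wdot w (u - v) z = wdot w u z - wdot w v z.
Proof. by rewrite /wdot -sumrB; apply: eq_bigr => i _; rewrite !mxE; ring. Qed.

Lemma wnorm2D w u v :
  wnorm2 w (u + v) = wnorm2 w u + wnorm2 w v + 2 * wdot w u v.
Proof.
rewrite /wnorm2 /wdot mulr_sumr -!big_split /=.
by apply: eq_bigr => i _; rewrite !mxE; ring.
Qed.

Lemma wnorm2Z w c v : wnorm2 w (c *: v) = c ^+ 2 * wnorm2 w v.
Proof. by rewrite /wnorm2 mulr_sumr; apply: eq_bigr => i _; rewrite !mxE; ring. Qed.

Lemma wnorm2_scalel w c v : wnorm2 (c *: w) v = c * wnorm2 w v.
Proof. by rewrite /wnorm2 mulr_sumr; apply: eq_bigr => i _; rewrite !mxE mulrA. Qed.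

Lemma wnorm2_ge0 w v : (forall i, 0 <= w i 0) -> 0 <= wnorm2 w v.
Proof. by move=> w_ge0; apply: sumr_ge0 => i _; rewrite mulr_ge0 ?sqr_ge0. Qed.

Lemma ler_wnorm2 w1 w2 v :
  (forall i, w1 i 0 <= w2 i 0) -> wnorm2 w1 v <= wnorm2 w2 v.
Proof. by move=> le_w; apply: ler_sum => i _; rewrite ler_wpM2r ?sqr_ge0. Qed.

End WeightedNorm.

Section Projection.
Variables (R : realType) (k n : nat) (f : 'cV[R]_k) (Phi : 'M[R]_(n, k)).
Hypothesis f_ge0 : forall i, 0 <= f i 0.

Lemma wnorm2_proj_split x v p : (exists theta, x = Phi^T *m theta) ->
  is_proj_f f Phi v p -> wnorm2 f (x - v) = wnorm2 f (x - p) + wnorm2 f (p - v).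
Proof.
move=> [tx ->] [[tp ->] orth_v].
have orth : wdot f (Phi^T *m tx - Phi^T *m tp) (Phi^T *m tp - v) = 0.
  by rewrite wdotC -opprB wdotNl -mulmxBr orth_v oppr0.
have -> : Phi^T *m tx - v = (Phi^T *m tx - Phi^T *m tp) + (Phi^T *m tp - v).
  by rewrite addrA subrK.
by rewrite [LHS]wnorm2D orth mulr0 addr0.
Qed.

Lemma wnorm2_proj_le y x v p : is_proj_f f Phi y x -> is_proj_f f Phi v p ->
  wnorm2 f (x - p) <= wnorm2 f (y - v).
Proof.
move=> [[tx ->] orth_y] [[tp ->] orth_v].
set q := Phi^T *m tx - Phi^T *m tp.
have orth : wdot f ((y - v) - q) q = 0.
  have -> : (y - v) - q = (y - Phi^T *m tx) - (v - Phi^T *m tp).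
    by apply/matrixP => i j; rewrite !mxE; ring.
  by rewrite wdotBl /q -mulmxBr orth_y orth_v subrr.
have -> : y - v = q + ((y - v) - q) by rewrite [RHS]addrC subrK.
rewrite [wnorm2 f (q + _)]wnorm2D wdotC orth mulr0 addr0.
by rewrite lerDl wnorm2_ge0.
Qed.

Lemma projected_fixed_point_bound y x v p a :
  is_proj_f f Phi y x -> is_proj_f f Phi v p ->
  wnorm2 f (y - v) <= a * wnorm2 f (x - v) ->
  (1 - a) * wnorm2 f (x - v) <= wnorm2 f (p - v).
Proof.
move=> proj_x proj_p contr.
have := wnorm2_proj_le proj_x proj_p.
have := wnorm2_proj_split proj_x.1 proj_p.
lra.
Qed.

End Projection.

Lemma sqr_mean_le (R : realFieldType) (I : finType) (w v : I -> R) :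
  (forall j, 0 <= w j) -> \sum_j w j = 1 ->
  (\sum_j w j * v j) ^+ 2 <= \sum_j w j * v j ^+ 2.
Proof.
move=> w_ge0 w_sum1.
have varE c : \sum_j w j * (v j - c) ^+ 2
    = \sum_j w j * v j ^+ 2 - 2 * c * \sum_j w j * v j + c ^+ 2 * \sum_j w j.
  by rewrite !mulr_sumr -sumrB -big_split /=; apply: eq_bigr => j _; ring.
have := varE (\sum_j w j * v j); rewrite w_sum1 => var_eq.
have var_ge0 : 0 <= \sum_j w j * (v j - \sum_j w j * v j) ^+ 2.
  by apply: sumr_ge0 => j _; rewrite mulr_ge0 ?sqr_ge0.
rewrite var_eq in var_ge0; lra.
Qed.

Section Stochastic.
Variables (R : realType) (k : nat) (P : 'M[R]_k).
Hypothesis P_stoch : row_stochastic P.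

Lemma wnorm2_stochastic_le (w e : 'cV[R]_k) : (forall i, 0 <= w i 0) ->
  wnorm2 w (P *m e) <= wnorm2 (P^T *m w) e.
Proof.
have [P_ge0 P_sum1] := P_stoch; move=> w_ge0.
apply: le_trans (_ : _ <= \sum_i w i 0 * \sum_j P i j * e j 0 ^+ 2) _.
  apply: ler_sum => i _; rewrite ler_wpM2l // mxE.
  exact: (sqr_mean_le (fun j => e j 0) (P_ge0 i) (P_sum1 i)).
rewrite /wnorm2 (eq_bigr (fun i => \sum_j w i 0 * P i j * e j 0 ^+ 2)); last first.
  by move=> i _; rewrite mulr_sumr; apply: eq_bigr => j _; rewrite mulrA.
rewrite exchange_big; apply: ler_sum => j _; rewrite !mxE mulr_suml.
by apply: ler_sum => i _; rewrite !mxE [w i 0 * _]mulrC.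
Qed.

Lemma row_stochastic_unitmx c : 0 <= c < 1 -> (1%:M - c *: P) \in unitmx.
Proof.
have [P_ge0 P_sum1] := P_stoch; move=> /andP[c_ge0 c_lt1].
rewrite -unitmx_tr -row_free_unit; apply: inj_row_free => u.
rewrite linearB linearZ /= trmx1 mulmxBr mulmx1 -scalemxAr => /eqP.
rewrite subr_eq0 => /eqP uM.
case: k P P_ge0 P_sum1 u uM => [|k'] Q Q_ge0 Q_sum1 u uM; first by apply/rowP => -[].
have uE i : u 0 i = c * \sum_j Q i j * u 0 j.
  by rewrite {1}uM !mxE; congr (_ * _); apply: eq_bigr => j _; rewrite mxE mulrC.
have [i _ i_max] := @arg_maxP _ _ _ ord0 xpredT (fun i => `|u 0 i|) isT.
have ui_le : `|u 0 i| <= c * `|u 0 i|.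
  rewrite {1}uE normrM ger0_norm // ler_wpM2l //.
  apply: le_trans (ler_norm_sum _ _ _) _.
  rewrite -[X in _ <= X]mul1r -(Q_sum1 i) mulr_suml; apply: ler_sum => j _.
  by rewrite normrM ger0_norm // ler_wpM2l //; exact: i_max.
have ui0 : `|u 0 i| = 0.
  apply/eqP; rewrite eq_le normr_ge0 andbT.
  by rewrite -(pmulr_rle0 _ (_ : 0 < 1 - c)) ?subr_gt0 // mulrBl mul1r subr_le0.
apply/rowP => j; rewrite mxE; apply/eqP.
by rewrite -normr_eq0 eq_le normr_ge0 andbT -ui0; exact: i_max.
Qed.

Lemma bellmanB (r : 'cV[R]_k) gamma x y :
  bellman r gamma P x - bellman r gamma P y = gamma *: (P *m (x - y)).
Proof. by rewrite /bellman mulmxBr scalerBr opprD addrACA subrr add0r. Qed.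

Lemma bellman_Vpi (r : 'cV[R]_k) gamma : 0 <= gamma < 1 ->
  bellman r gamma P (Vpi r gamma P) = Vpi r gamma P.
Proof.
move=> /row_stochastic_unitmx unitA; set V := Vpi r gamma P.
have rE : (1%:M - gamma *: P) *m V = r by rewrite mulmxA mulmxV // mul1mx.
by rewrite -rE mulmxBl mul1mx -scalemxAl /bellman subrK.
Qed.

Lemma emph_f_stochastic (d : 'cV[R]_k) beta : 0 <= beta < 1 ->
  beta *: (P^T *m emph_f d beta P) = emph_f d beta P - d.
Proof.
move=> /row_stochastic_unitmx unitA; set f := emph_f d beta P.
have dE : (1%:M - beta *: P)^T *m f = d.
  by rewrite mulmxA -trmx_mul mulVmx // trmx1 mul1mx.
rewrite -[X in _ = _ - X]dE linearB /= trmx1 mulmxBl mul1mx linearZ /=.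
by rewrite -scalemxAl opprB addrC subrK.
Qed.

End Stochastic.

Section Emphatic.
Variables (R : realType) (k : nat) (P : 'M[R]_k) (d : 'cV[R]_k) (beta : R).
Hypotheses (P_stoch : row_stochastic P) (beta_gt0 : 0 < beta) (beta_lt1 : beta < 1).
Let f := emph_f d beta P.
Hypothesis f_gt0 : forall s, 0 < f s 0.

Lemma emph_fE j : d j 0 = f j 0 - beta * (P^T *m f) j 0.
Proof.
have dE : d = f - beta *: (P^T *m f).
  by rewrite emph_f_stochastic ?ltW // opprB addrC subrK.
by rewrite {1}dE !mxE.
Qed.

Lemma prob_le_emph_f j : d j 0 <= f j 0.
Proof.
have [P_ge0 _] := P_stoch.
rewrite emph_fE gerBl mulr_ge0 ?(ltW beta_gt0) // mxE.
by apply: sumr_ge0 => i _; rewrite mxE mulr_ge0 // ltW.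
Qed.

Lemma emph_wnorm2_contraction kappa (gamma : R) (e : 'cV[R]_k) :
  (forall s, kappa <= d s 0 / f s 0) ->
  wnorm2 f (gamma *: (P *m e)) <= gamma ^+ 2 / beta * (1 - kappa) * wnorm2 f e.
Proof.
move=> kappa_min.
rewrite wnorm2Z -2!mulrA ler_wpM2l ?sqr_ge0 // mulrA -wnorm2_scalel.
apply: le_trans (wnorm2_stochastic_le P_stoch _ (fun i => ltW (f_gt0 i))) _.
apply: ler_wnorm2 => j; rewrite [X in _ <= X]mxE.
have : kappa * f j 0 <= d j 0 by rewrite -ler_pdivlMr.
rewrite emph_fE => kappa_le.
rewrite -(ler_pM2l beta_gt0) !mulrA mulfV ?gt_eqF // mul1r; lra.
Qed.

End Emphatic.

Theorem corollary1 (R : realType) (k n : nat)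
  (P : 'M[R]_k) (r : 'cV[R]_k) (gamma beta : R) (d : 'cV[R]_k)
  (Phi : 'M[R]_(n, k)) (kappa : R) (theta_star : 'cV[R]_n) (piV : 'cV[R]_k) :
  row_stochastic P ->
  0 < gamma < 1 -> 0 < beta < 1 ->
  prob_vec d ->
  (forall s, 0 < (emph_f d beta P) s 0) ->
  (* kappa = min_s d(s) / f(s) *)
  kappa \in [seq d s 0 / (emph_f d beta P) s 0 | s <- enum 'I_k] ->
  (forall s, kappa <= d s 0 / (emph_f d beta P) s 0) ->
  beta > gamma ^+ 2 * (1 - kappa) ->
  (* Phi^T theta_star = Pi_f T (Phi^T theta_star) *)
  is_proj_f (emph_f d beta P) Phi (bellman r gamma P (Phi^T *m theta_star))
    (Phi^T *m theta_star) ->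
  (* piV = Pi_f V^pi *)
  is_proj_f (emph_f d beta P) Phi (Vpi r gamma P) piV ->
  wnorm (emph_f d beta P) (Phi^T *m theta_star - Vpi r gamma P)
    <= (Num.sqrt (1 - gamma ^+ 2 / beta * (1 - kappa)))^-1
       * wnorm (emph_f d beta P) (piV - Vpi r gamma P)
  /\
  wnorm d (Phi^T *m theta_star - Vpi r gamma P)
    <= (Num.sqrt (gamma * (1 - gamma ^+ 2 / beta * (1 - kappa))))^-1
       * wnorm (emph_f d beta P) (piV - Vpi r gamma P).
Proof.
move=> P_stoch /andP[g_gt0 g_lt1] /andP[b_gt0 b_lt1] _ f_gt0 _ kappa_min b_big
  proj_x proj_p.
set f := emph_f d beta P in f_gt0 kappa_min proj_x proj_p *.
set V := Vpi r gamma P in proj_p *; set x := Phi^T *m theta_star in proj_x *.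
set a := gamma ^+ 2 / beta * (1 - kappa).
have a_lt1 : 0 < 1 - a by rewrite subr_gt0 /a mulrAC ltr_pdivrMr // mul1r.
have contr : wnorm2 f (bellman r gamma P x - V) <= a * wnorm2 f (x - V).
  have V_fixed : bellman r gamma P V = V by rewrite bellman_Vpi // ltW.
  by rewrite -{1}V_fixed bellmanB; apply: emph_wnorm2_contraction.
have bound := projected_fixed_point_bound (fun i => ltW (f_gt0 i)) proj_x proj_p contr.
have f_bound : wnorm f (x - V) <= (Num.sqrt (1 - a))^-1 * wnorm f (piV - V).
  rewrite ler_pdivlMl ?sqrtr_gt0 // !wnormE -sqrtrM ?ler_wsqrtr //.
  exact: ltW.
split => //; apply: le_trans (_ : wnorm d (x - V) <= wnorm f (x - V)) _.
  by rewrite !wnormE ler_wsqrtr // ler_wnorm2 // => j; apply: prob_le_emph_f.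
apply: le_trans f_bound _; rewrite ler_wpM2r ?sqrtr_ge0 //.
rewrite lef_pV2 ?posrE ?sqrtr_gt0 ?mulr_gt0 //.
by rewrite ler_wsqrtr // ger_pMl // ltW.
Qed.
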